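(* If $G$ is a finite group, then there is a closed subgroup $H_0$ of $G^\omega$ such that for every closed subgroup $H$ of $G^\omega$ there is a continuous group homomorphism $\varphi:G^\omega\to G^\omega$ with $\varphi^{-1}(H_0)=H$.
   Context: $G$ carries the discrete topology and $G^\omega$ the product topology. *)

From HB Require Import structures.
From mathcomp Require Import all_boot all_order all_algebra all_fingroup.
From mathcomp Require Import all_classical all_reals.
From mathcomp Require Import topology_structure discrete_topology function_spaces.

Set Implicit Arguments.
Unset Strict Implicit.
Unset Printing Implicit Defensive.

Local Open Scope classical_set_scope.

Definition Gomega (gT : finGroupType) : Type :=
  {ptws nat -> discrete_topology gT}.

Definition gw_one (gT : finGroupType) : Gomega gT := fun _ => (1 : gT)%g.
Definition gw_mul (gT : finGroupType) (x y : Gomega gT) : Gomega gT :=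
  fun n => ((x n : gT) * (y n : gT))%g.
Definition gw_inv (gT : finGroupType) (x : Gomega gT) : Gomega gT :=
  fun n => ((x n : gT)^-1)%g.

Definition is_subgroup_omega (gT : finGroupType) (H : set (Gomega gT)) : Prop :=
  [/\ H (gw_one gT),
      (forall x y, H x -> H y -> H (gw_mul x y)) &
      (forall x, H x -> H (gw_inv x))].

Definition closed_subgroup_omega (gT : finGroupType) (H : set (Gomega gT)) : Prop :=
  is_subgroup_omega H /\ closed H.

Definition group_hom_omega (gT : finGroupType) (phi : Gomega gT -> Gomega gT) : Prop :=
  forall x y, phi (gw_mul x y) = gw_mul (phi x) (phi y).

From mathcomp Require Import all_boot all_order all_algebra all_fingroup.
From mathcomp Require Import all_classical all_reals.
From mathcomp Require Import topology_structure uniform_structure discrete_topology function_spaces.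

(* A closed subgroup H of G^omega is determined by its projections H_n onto
   the first n coordinates, which are subgroups of the finite group G^n.
   Reserve, via an injective coding, one block of n coordinates of G^omega for
   every pair (n, L) with L a subgroup of G^n, and let H0 consist of the
   sequences whose restriction to each block (n, L) lies in L.  Given H, the
   homomorphism phi copies x_0, ..., x_(n-1) into the block (n, H_n) and puts
   1 everywhere else; every other block then lies in its subgroup, so
   phi x is in H0 iff every prefix of x lies in the corresponding H_n, i.e.
   iff x is in the closure of H, which is H. *)

Local Open Scope classical_set_scope.

Set Implicit Arguments.
Unset Strict Implicit.
Unset Printing Implicit Defensive.

Section UniversalClosedSubgroup.
Variable gT : finGroupType.

Definition agree_on (c : nat -> nat) (k : nat) (y : Gomega gT) : set (Gomega gT) :=
  [set z | forall i, (i < k)%N -> z (c i) = y (c i)].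

Lemma nbhs_coord_eq (y : Gomega gT) (j : nat) :
  nbhs y [set z : Gomega gT | z j = y j].
Proof.
exact: (@proj_continuous nat (fun _ => discrete_topology gT) j y _
          (discrete_set1 (y j))).
Qed.

Lemma nbhs_agree_on (y : Gomega gT) c k : nbhs y (agree_on c k y).
Proof.
elim: k => [|k IHk]; first by apply: filterS filterT => z _ i.
apply: filterS (filterI IHk (nbhs_coord_eq y (c k))) => z [agree_k eq_k] i.
by rewrite ltnS leq_eqVlt => /orP[/eqP -> //|]; exact: agree_k.
Qed.

Lemma nbhs_agree_prefix (y : Gomega gT) (B : set (Gomega gT)) :
  nbhs y B -> exists k, agree_on id k y `<=` B.
Proof.
pose F := filter_from setT (fun k => agree_on id k y).
have F_filter : Filter F.
  apply: filter_fromT_filter; first by exists 0%N.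
  move=> i j; exists (maxn i j) => z agree_ij.
  by split=> l lt_l; apply: agree_ij; apply: leq_trans lt_l _;
    rewrite ?leq_maxl ?leq_maxr.
have F_cvg : {ptws, F --> y}.
  apply/(@pointwise_cvgP (discrete_topology nat)
          (discrete_topology gT : uniformType) F y F_filter) => t.
  by apply/discrete_cvg; exists t.+1 => // z; apply.
by move=> /F_cvg [k _ sub_B]; exists k.
Qed.

Lemma closed_prefix_approx (H : set (Gomega gT)) (y : Gomega gT) :
  closed H -> (forall k, exists2 z, H z & agree_on id k y z) -> H y.
Proof.
move=> closedH approx; apply: closedH => B /nbhs_agree_prefix [k sub_B].
have [z Hz agree_z] := approx k.
by exists z; split => //; apply: sub_B => i /agree_z.
Qed.

Lemma continuous_coordwise (f : Gomega gT -> Gomega gT) :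
  (forall x t, nbhs x [set z | f z t = f x t]) -> continuous f.
Proof.
move=> loc_const x.
have f_filter : Filter (f @ nbhs x) by apply: fmap_filter.
apply/(@pointwise_cvgP (discrete_topology nat)
        (discrete_topology gT : uniformType) _ (f x) f_filter) => t.
exact/discrete_cvg/loc_const.
Qed.

Local Open Scope group_scope.

Definition Gpow n := {ffun 'I_n -> gT}.

Definition ffun_subgroup n (L : {set Gpow n}) : Prop :=
  [/\ [ffun=> 1] \in L,
      (forall f g, f \in L -> g \in L -> [ffun i => f i * g i] \in L) &
      (forall f, f \in L -> [ffun i => (f i)^-1] \in L)].

(* The coordinate of G^omega reserved for the i-th entry of the block (n, L);
   injective in (n, L, i) since pickle is. *)
Definition block_coord n (L : {set Gpow n}) (i : nat) : nat :=
  pickle (n, (pickle L, i)).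

Definition restrict n (c : nat -> nat) (y : Gomega gT) : Gpow n :=
  [ffun i : 'I_n => y (c i)].

Definition universal_subgroup : set (Gomega gT) :=
  fun y => forall n (L : {set Gpow n}),
    ffun_subgroup L -> restrict n (block_coord L) y \in L.

Definition prefix_proj (H : set (Gomega gT)) n : {set Gpow n} :=
  [set f | `[< exists2 x, H x & f = restrict n id x >]].

Definition block_embed (H : set (Gomega gT)) (x : Gomega gT) : Gomega gT :=
  fun k => if unpickle k is Some (n, (l, i)) then
             if (i < n)%N && (l == pickle (prefix_proj H n)) then x i else 1
           else 1.

Lemma block_embed_coord H x n (L : {set Gpow n}) (i : 'I_n) :
  block_embed H x (block_coord L i) = if L == prefix_proj H n then x i else 1.
Proof.
by rewrite /block_embed /block_coord pickleK ltn_ord (inj_eq (pcan_inj pickleK)).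
Qed.

Lemma restrict_block_embed H x n :
  restrict n (block_coord (prefix_proj H n)) (block_embed H x) = restrict n id x.
Proof. by apply/ffunP => i; rewrite !ffunE block_embed_coord eqxx. Qed.

Lemma restrict_block_embed_other H x n (L : {set Gpow n}) :
  L != prefix_proj H n -> restrict n (block_coord L) (block_embed H x) = [ffun=> 1].
Proof.
by move=> neL; apply/ffunP => i; rewrite !ffunE block_embed_coord (negbTE neL).
Qed.

Lemma universal_subgroup_subgroup : is_subgroup_omega universal_subgroup.
Proof.
split.
- by move=> n L [one_L _ _]; congr (_ \in L): one_L.
- move=> x y Ux Uy n L subL; have [_ mul_L _] := subL.
  have := mul_L _ _ (Ux n L subL) (Uy n L subL); congr (_ \in L).
  by apply/ffunP => i; rewrite !ffunE.
- move=> x Ux n L subL; have [_ _ inv_L] := subL.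
  have := inv_L _ (Ux n L subL); congr (_ \in L).
  by apply/ffunP => i; rewrite !ffunE.
Qed.

Lemma universal_subgroup_closed : closed universal_subgroup.
Proof.
move=> y cl_y n L subL.
have [z [Uz agree_z]] := cl_y _ (nbhs_agree_on y (block_coord L) n).
have := Uz n L subL; congr (_ \in L).
by apply/ffunP => i; rewrite !ffunE agree_z.
Qed.

Lemma prefix_proj_subgroup H n :
  is_subgroup_omega H -> ffun_subgroup (prefix_proj H n).
Proof.
case=> one_H mul_H inv_H; split; rewrite ?inE.
- by exists (gw_one gT).
- move=> f g; rewrite !inE => -[x Hx ->] [x' Hx' ->].
  exists (gw_mul x x'); first exact: mul_H.
  by apply/ffunP => i; rewrite !ffunE.
- move=> f; rewrite !inE => -[x Hx ->].
  exists (gw_inv x); first exact: inv_H.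
  by apply/ffunP => i; rewrite !ffunE.
Qed.

Lemma block_embed_hom H : group_hom_omega (block_embed H).
Proof.
move=> x y; apply: funext => k; rewrite /block_embed /gw_mul.
case: (unpickle k) => [[n [l i]]|]; last by rewrite mulg1.
by case: ifP; rewrite ?mulg1.
Qed.

Lemma block_embed_continuous H : continuous (block_embed H).
Proof.
apply: continuous_coordwise => x t; rewrite /block_embed.
case: (unpickle t) => [[n [l i]]|]; last exact: filterS filterT.
by case: ifP => _; [exact: nbhs_coord_eq | exact: filterS filterT].
Qed.

Lemma block_embed_preimage H :
  closed_subgroup_omega H -> block_embed H @^-1` universal_subgroup = H.
Proof.
case=> subH closedH; apply/seteqP; split => x /=.
- move=> Ux; apply: closed_prefix_approx => // k.
  have := Ux k _ (prefix_proj_subgroup k subH).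
  rewrite restrict_block_embed inE => /asboolP[z Hz eq_xz].
  exists z => // i lt_ik.
  by have := congr1 (fun f : Gpow k => f (Ordinal lt_ik)) eq_xz; rewrite !ffunE.
- move=> Hx n L subL; have [->|neL] := eqVneq L (prefix_proj H n).
    by rewrite restrict_block_embed inE; apply/asboolP; exists x.
  by rewrite restrict_block_embed_other //; case: subL.
Qed.

End UniversalClosedSubgroup.

Theorem mainTheorem18 (gT : finGroupType) :
  exists H0 : set (Gomega gT),
    closed_subgroup_omega H0 /\
    forall H : set (Gomega gT), closed_subgroup_omega H ->
      exists phi : Gomega gT -> Gomega gT,
        [/\ group_hom_omega phi, continuous phi & phi @^-1` H0 = H].
Proof.
exists (@universal_subgroup gT).
split; first by split; [exact: universal_subgroup_subgroup
                      | exact: universal_subgroup_closed].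
move=> H closed_subH; exists (block_embed H); split.
- exact: block_embed_hom.
- exact: block_embed_continuous.
- exact: block_embed_preimage.
Qed.
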